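(* Let $\mathbb{E}$ be a regular category, $\Sigma$ a fibrational class of split epimorphisms, and suppose $\mathbb{E}$ is a $\Sigma$-Mal'tsev category. Let $(f,s)\colon X\rightleftarrows Y$ and $(f',s')\colon X'\rightleftarrows Y'$ be split epimorphisms and $x\colon X\to X'$, $y\colon Y\to Y'$ regular epimorphisms with $f'x=yf$ and $xs=s'y$. If $(f,s)\in\Sigma$, then the square $f'x=yf$ is a regular pushout, i.e. the induced morphism $(f,x)\colon X\to Y\times_{Y'}X'$ into the pullback of $f'$ along $y$ is a regular epimorphism.
   Context: A split epimorphism is a pair $(f,s)$ with $fs=1$. A class $\Sigma$ of split epimorphisms is fibrational if it contains all split epimorphisms $(f,s)$ with $f$ invertible and is stable under pullback along any morphism. A pair of morphisms with common codomain $Z$ is jointly extremally epic if it factors jointly through no non-invertible monomorphism into $Z$. $\mathbb{E}$ is $\Sigma$-Mal'tsev if for every split epimorphism $(f,s)\colon X\rightleftarrows Y$ in $\Sigma$ and every split epimorphism $(g,t)$ with $g\colon Y'\to Y$, letting $X'=Y'\times_YX$, $s'=(1_{Y'},sg)$, $\bar t=(tf,1_X)$, the pair $(s',\bar t)$ is jointly extremally epic. *)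

Set Implicit Arguments.
Unset Strict Implicit.

(** Categories (composition written [comp g f] = g ∘ f). *)
Record Category := {
  Obj :> Type;
  Hom : Obj -> Obj -> Type;
  id : forall A, Hom A A;
  comp : forall A B C, Hom B C -> Hom A B -> Hom A C;
  comp_assoc : forall A B C D (h : Hom C D) (g : Hom B C) (f : Hom A B),
      comp h (comp g f) = comp (comp h g) f;
  comp_id_l : forall A B (f : Hom A B), comp (id B) f = f;
  comp_id_r : forall A B (f : Hom A B), comp f (id A) = f
}.

Arguments Hom {c} _ _.
Arguments id {c} _.
Arguments comp {c A B C} _ _.

Section Notions.
Variable C : Category.

Definition is_mono {A B : C} (m : Hom A B) : Prop :=
  forall Z (u v : Hom Z A), comp m u = comp m v -> u = v.

Definition is_iso {A B : C} (f : Hom A B) : Prop :=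
  exists g : Hom B A, comp g f = id A /\ comp f g = id B.

Definition is_pullback {A B Z P : C} (f : Hom A Z) (g : Hom B Z)
  (p1 : Hom P A) (p2 : Hom P B) : Prop :=
  comp f p1 = comp g p2 /\
  forall Q (q1 : Hom Q A) (q2 : Hom Q B), comp f q1 = comp g q2 ->
    exists u : Hom Q P, comp p1 u = q1 /\ comp p2 u = q2 /\
      forall u' : Hom Q P, comp p1 u' = q1 -> comp p2 u' = q2 -> u' = u.

Definition is_terminal (T : C) : Prop :=
  forall A : C, exists t : Hom A T, forall t' : Hom A T, t' = t.

Definition is_coequalizer {K A B : C} (u v : Hom K A) (e : Hom A B) : Prop :=
  comp e u = comp e v /\
  forall D (h : Hom A D), comp h u = comp h v ->
    exists k : Hom B D, comp k e = h /\
      forall k' : Hom B D, comp k' e = h -> k' = k.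

Definition is_regular_epi {A B : C} (e : Hom A B) : Prop :=
  exists K (u v : Hom K A), is_coequalizer u v e.

Definition is_regular_category : Prop :=
  (exists T : C, is_terminal T) /\
  (forall A B Z (f : Hom A Z) (g : Hom B Z),
      exists P (p1 : Hom P A) (p2 : Hom P B), is_pullback f g p1 p2) /\
  (forall A B (f : Hom A B), exists M (e : Hom A M) (m : Hom M B),
      is_regular_epi e /\ is_mono m /\ comp m e = f) /\
  (forall A B Z P (f : Hom A Z) (g : Hom B Z) (p1 : Hom P A) (p2 : Hom P B),
      is_pullback f g p1 p2 -> is_regular_epi f -> is_regular_epi p2).

Definition SplitEpiClass := forall X Y : C, Hom X Y -> Hom Y X -> Prop.

Definition is_split_epi_class (Sigma : SplitEpiClass) : Prop :=
  forall X Y (f : Hom X Y) (s : Hom Y X), Sigma X Y f s -> comp f s = id Y.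

(** Fibrational: contains every split epi (f,s) with f invertible, and is
    stable under pullback along any morphism g : Y' -> Y (the pulled-back
    split epi being (p1, (1_{Y'}, s g)) with X' = Y' ×_Y X). *)
Definition is_fibrational (Sigma : SplitEpiClass) : Prop :=
  is_split_epi_class Sigma /\
  (forall X Y (f : Hom X Y) (s : Hom Y X),
      comp f s = id Y -> is_iso f -> Sigma X Y f s) /\
  (forall X Y (f : Hom X Y) (s : Hom Y X), Sigma X Y f s ->
    forall Y' (g : Hom Y' Y) X' (p1 : Hom X' Y') (p2 : Hom X' X),
      is_pullback g f p1 p2 ->
      forall s' : Hom Y' X', comp p1 s' = id Y' -> comp p2 s' = comp s g ->
      Sigma X' Y' p1 s').

Definition jointly_extremally_epic {A B Z : C} (u : Hom A Z) (v : Hom B Z)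
  : Prop :=
  forall M (m : Hom M Z), is_mono m ->
    (exists a : Hom A M, comp m a = u) ->
    (exists b : Hom B M, comp m b = v) ->
    is_iso m.

Definition is_Sigma_Maltsev (Sigma : SplitEpiClass) : Prop :=
  forall X Y (f : Hom X Y) (s : Hom Y X), Sigma X Y f s ->
  forall Y' (g : Hom Y' Y) (t : Hom Y Y'), comp g t = id Y ->
  forall X' (p1 : Hom X' Y') (p2 : Hom X' X), is_pullback g f p1 p2 ->
  forall (s' : Hom Y' X') (tbar : Hom X X'),
    comp p1 s' = id Y' -> comp p2 s' = comp s g ->
    comp p1 tbar = comp t f -> comp p2 tbar = id X ->
    jointly_extremally_epic s' tbar.

End Notions.


(* Let (k1, k2) : K ⇉ Y be the kernel pair of y, split by the diagonal d,
   and X2 = K ×_Y X the pullback of f along k1.  The Σ-Mal'tsev condition,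
   applied to (f, s) and (k1, d), makes the sections s2 = (1, s k1) and
   tb = (d f, 1) of X2 jointly extremally epic.  By pullback pasting, the
   comparison φ : X2 → P = Y ×_{Y'} X' is a pullback of the regular
   epimorphism x, hence a regular epimorphism.  If u = m e is the image
   factorization of u, both sections are sent by φ into m, so they factor
   through the pullback of m along φ, which is therefore invertible: φ factors
   through m.  As φ is a regular epimorphism, m is an isomorphism and u is a
   regular epimorphism. *)

Section Pullbacks.
Context {E : Category}.

Lemma pullback_lift {A B Z P Q : E} {f : Hom A Z} {g : Hom B Z}
  {p1 : Hom P A} {p2 : Hom P B} (H : is_pullback f g p1 p2)
  (a : Hom Q A) (b : Hom Q B) :
  comp f a = comp g b -> exists w, comp p1 w = a /\ comp p2 w = b.
Proof.
  intros Hab. destruct (proj2 H Q a b Hab) as [w [Hw1 [Hw2 _]]].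
  exists w. split; assumption.
Qed.

Lemma pullback_hom_ext {A B Z P Q : E} {f : Hom A Z} {g : Hom B Z}
  {p1 : Hom P A} {p2 : Hom P B} (H : is_pullback f g p1 p2) (a b : Hom Q P) :
  comp p1 a = comp p1 b -> comp p2 a = comp p2 b -> a = b.
Proof.
  intros H1 H2. destruct H as [Hc Hu].
  destruct (Hu Q (comp p1 a) (comp p2 a)) as [w [_ [_ Hw]]].
  { rewrite !comp_assoc, Hc. reflexivity. }
  rewrite (Hw a eq_refl eq_refl), (Hw b (eq_sym H1) (eq_sym H2)). reflexivity.
Qed.

Lemma pullback_sym {A B Z P : E} {f : Hom A Z} {g : Hom B Z}
  {p1 : Hom P A} {p2 : Hom P B} :
  is_pullback f g p1 p2 -> is_pullback g f p2 p1.
Proof.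
  intros H. split; [symmetry; exact (proj1 H)|].
  intros Q q2 q1 Hq. destruct (proj2 H Q q1 q2 (eq_sym Hq)) as [w [Hw1 [Hw2 Hw]]].
  exists w. split; [exact Hw2|]. split; [exact Hw1|].
  intros w' H2 H1. exact (Hw w' H1 H2).
Qed.

(*  P --p2--> Q --q2--> C
    |p1       |q1       |h
    A --f---> B --g---> Z      (also the shape of pullback_cancel) *)
Lemma pullback_paste {A B C Z P Q : E} {f : Hom A B} {g : Hom B Z} {h : Hom C Z}
  {q1 : Hom Q B} {q2 : Hom Q C} {p1 : Hom P A} {p2 : Hom P Q} :
  is_pullback g h q1 q2 -> is_pullback f q1 p1 p2 ->
  is_pullback (comp g f) h p1 (comp q2 p2).
Proof.
  intros Hr Hl. split.
  - rewrite <- comp_assoc, (proj1 Hl), !comp_assoc, (proj1 Hr). reflexivity.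
  - intros R c1 c2 Hc.
    destruct (pullback_lift Hr (comp f c1) c2) as [w [Hw1 Hw2]].
    { rewrite comp_assoc. exact Hc. }
    destruct (pullback_lift Hl c1 w (eq_sym Hw1)) as [v [Hv1 Hv2]].
    exists v. split; [exact Hv1|]. split; [rewrite <- comp_assoc, Hv2; exact Hw2|].
    intros v' H1 H2. apply (pullback_hom_ext Hl); [congruence|].
    apply (pullback_hom_ext Hr).
    + rewrite !comp_assoc, <- (proj1 Hl), <- !comp_assoc, H1, Hv1. reflexivity.
    + rewrite comp_assoc, H2, Hv2. exact (eq_sym Hw2).
Qed.

Lemma pullback_cancel {A B C Z P Q : E} {f : Hom A B} {g : Hom B Z} {h : Hom C Z}
  {q1 : Hom Q B} {q2 : Hom Q C} {p1 : Hom P A} {p2 : Hom P Q} :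
  is_pullback g h q1 q2 -> is_pullback (comp g f) h p1 (comp q2 p2) ->
  comp q1 p2 = comp f p1 -> is_pullback f q1 p1 p2.
Proof.
  intros Hr Ho Hc. split; [exact (eq_sym Hc)|].
  intros R c1 c2 Hc12.
  destruct (proj2 Ho R c1 (comp q2 c2)) as [v [Hv1 [Hv2 Hv]]].
  { rewrite <- comp_assoc, Hc12, !comp_assoc, (proj1 Hr). reflexivity. }
  assert (Hp2v : comp p2 v = c2).
  { apply (pullback_hom_ext Hr).
    - rewrite comp_assoc, Hc, <- comp_assoc, Hv1. exact Hc12.
    - rewrite comp_assoc. exact Hv2. }
  exists v. split; [exact Hv1|]. split; [exact Hp2v|].
  intros v' H1 H2. apply Hv; [exact H1|].
  rewrite <- comp_assoc, H2. reflexivity.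
Qed.

Lemma pullback_mono {A B Z P : E} {f : Hom A Z} {g : Hom B Z}
  {p1 : Hom P A} {p2 : Hom P B} :
  is_pullback f g p1 p2 -> is_mono g -> is_mono p1.
Proof.
  intros H Hg Q a b Hab. apply (pullback_hom_ext H); [exact Hab|].
  apply Hg. rewrite !comp_assoc, <- (proj1 H), <- !comp_assoc, Hab. reflexivity.
Qed.

End Pullbacks.

Section RegularEpis.
Context {E : Category}.

Lemma regular_epi_mono_iso {A B M : E} {r : Hom A B} {m : Hom M B} (k : Hom A M) :
  is_regular_epi r -> is_mono m -> comp m k = r -> is_iso m.
Proof.
  intros [K [a [b [Hc Hu]]]] Hm Hr.
  assert (Hk : comp k a = comp k b).
  { apply Hm. rewrite !comp_assoc, Hr. exact Hc. }
  destruct (Hu M k Hk) as [k' [Hk' _]].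
  destruct (Hu B r Hc) as [z [_ Hz]].
  assert (Hmk' : comp m k' = id B).
  { rewrite (Hz (comp m k')), (Hz (id B)); [reflexivity | apply comp_id_l |].
    rewrite <- comp_assoc, Hk'. exact Hr. }
  exists k'. split; [|exact Hmk'].
  apply Hm. rewrite comp_assoc, Hmk', comp_id_l, comp_id_r. reflexivity.
Qed.

Lemma iso_comp_regular_epi {A B M : E} {e : Hom A M} {m : Hom M B} :
  is_regular_epi e -> is_iso m -> is_regular_epi (comp m e).
Proof.
  intros [K [a [b [Hc Hu]]]] [mi [Hmim Hmmi]].
  exists K, a, b. split.
  - rewrite <- !comp_assoc, Hc. reflexivity.
  - intros D h Hh. destruct (Hu D h Hh) as [k [Hk Hk']].
    exists (comp k mi). split.
    + rewrite <- comp_assoc, (comp_assoc mi m e), Hmim, comp_id_l. exact Hk.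
    + intros k'' H''. rewrite <- (Hk' (comp k'' m)).
      * rewrite <- comp_assoc, Hmmi, comp_id_r. reflexivity.
      * rewrite <- comp_assoc. exact H''.
Qed.

Lemma jointly_extremally_epic_factor_mono {Z W M N A B : E}
  {phi : Hom Z W} {m : Hom M W} {n1 : Hom N Z} {n2 : Hom N M}
  {a : Hom A Z} {b : Hom B Z} :
  is_pullback phi m n1 n2 -> is_mono m -> jointly_extremally_epic a b ->
  (exists a', comp m a' = comp phi a) -> (exists b', comp m b' = comp phi b) ->
  exists k, comp m k = phi.
Proof.
  intros HN Hm Hab [a' Ha'] [b' Hb'].
  assert (Hn1 : is_iso n1).
  { apply Hab; [exact (pullback_mono HN Hm)| |].
    - destruct (pullback_lift HN a a' (eq_sym Ha')) as [w [Hw _]]. exists w. exact Hw.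
    - destruct (pullback_lift HN b b' (eq_sym Hb')) as [w [Hw _]]. exists w. exact Hw. }
  destruct Hn1 as [j [_ Hn1j]].
  exists (comp n2 j).
  rewrite comp_assoc, <- (proj1 HN), <- comp_assoc, Hn1j, comp_id_r. reflexivity.
Qed.

Lemma regular_epi_of_jointly_extremally_epic_cover (HE : is_regular_category E)
  {Z P X A B : E} {phi : Hom Z P} {u : Hom X P} {a : Hom A Z} {b : Hom B Z} :
  is_regular_epi phi -> jointly_extremally_epic a b ->
  (exists a', comp u a' = comp phi a) -> (exists b', comp u b' = comp phi b) ->
  is_regular_epi u.
Proof.
  intros Hphi Hab [a' Ha'] [b' Hb'].
  destruct HE as [_ [Hpb [Hfact _]]].
  destruct (Hfact _ _ u) as [M [e [m [He [Hm Hme]]]]].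
  destruct (Hpb _ _ _ phi m) as [N [n1 [n2 HN]]].
  destruct (jointly_extremally_epic_factor_mono HN Hm Hab) as [k Hk].
  - exists (comp e a'). rewrite comp_assoc, Hme. exact Ha'.
  - exists (comp e b'). rewrite comp_assoc, Hme. exact Hb'.
  - rewrite <- Hme. exact (iso_comp_regular_epi He (regular_epi_mono_iso k Hphi Hm Hk)).
Qed.

End RegularEpis.

Theorem proposition7p6 (E : Category) (Sigma : SplitEpiClass E)
  (HE : is_regular_category E)
  (HSigma : is_fibrational Sigma)
  (HM : is_Sigma_Maltsev Sigma)
  (X Y X' Y' : E)
  (f : Hom X Y) (s : Hom Y X) (hfs : comp f s = id Y)
  (f' : Hom X' Y') (s' : Hom Y' X') (hfs' : comp f' s' = id Y')
  (x : Hom X X') (y : Hom Y Y')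
  (hx : is_regular_epi x) (hy : is_regular_epi y)
  (hsq1 : comp f' x = comp y f) (hsq2 : comp x s = comp s' y)
  (hS : Sigma X Y f s)
  (P : E) (q1 : Hom P Y) (q2 : Hom P X') (hP : is_pullback y f' q1 q2)
  (u : Hom X P) (hu1 : comp q1 u = f) (hu2 : comp q2 u = x) :
  is_regular_epi u.
Proof.
  pose proof HE as [_ [Hpb [_ Hstab]]].
  destruct (Hpb _ _ _ y y) as [K [k1 [k2 HK]]].
  destruct (pullback_lift HK (id Y) (id Y) eq_refl) as [d [Hd1 Hd2]].
  destruct (Hpb _ _ _ k1 f) as [X2 [p1 [p2 HX2]]].
  destruct (pullback_lift HX2 (id K) (comp s k1)) as [s2 [Hs21 Hs22]].
  { rewrite comp_id_r, comp_assoc, hfs, comp_id_l. reflexivity. }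
  destruct (pullback_lift HX2 (comp d f) (id X)) as [tb [Htb1 Htb2]].
  { rewrite comp_id_r, comp_assoc, Hd1, comp_id_l. reflexivity. }
  destruct (pullback_lift hP (comp k2 p1) (comp x p2)) as [phi [Hphi1 Hphi2]].
  { rewrite !comp_assoc, <- (proj1 HK), hsq1, <- !comp_assoc, (proj1 HX2).
    reflexivity. }
  assert (Hphi : is_regular_epi phi).
  { apply (Hstab _ _ _ _ x q2 p2 phi); [|exact hx].
    apply (pullback_cancel (pullback_sym hP)); [|exact Hphi2].
    rewrite hsq1, Hphi1. exact (pullback_paste HK (pullback_sym HX2)). }
  assert (Hphis2 : comp phi s2 = comp u (comp s k2)).
  { apply (pullback_hom_ext hP).
    - rewrite !comp_assoc, Hphi1, hu1, hfs, <- comp_assoc, Hs21, comp_id_r, comp_id_l.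
      reflexivity.
    - rewrite !comp_assoc, Hphi2, hu2, <- !comp_assoc, Hs22, !comp_assoc, hsq2,
        <- !comp_assoc, (proj1 HK). reflexivity. }
  assert (Hphitb : comp phi tb = u).
  { apply (pullback_hom_ext hP).
    - rewrite comp_assoc, Hphi1, <- comp_assoc, Htb1, comp_assoc, Hd2, comp_id_l, hu1.
      reflexivity.
    - rewrite comp_assoc, Hphi2, <- comp_assoc, Htb2, comp_id_r, hu2. reflexivity. }
  apply (regular_epi_of_jointly_extremally_epic_cover HE Hphi
           (HM X Y f s hS K k1 d Hd1 X2 p1 p2 HX2 s2 tb Hs21 Hs22 Htb1 Htb2)).
  - exists (comp s k2). exact (eq_sym Hphis2).
  - exists (id X). rewrite comp_id_r. exact (eq_sym Hphitb).
Qed.
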